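(* Let $t \ge 2$ and $G = K_{m_1} \otimes \cdots \otimes K_{m_t}$ with $m_i \geq 3$ for all $i$. Then $$\dim(G) \geq \max_{1 \le j \le t} \dim\Big(\bigotimes_{i \ne j} K_{m_i}\Big),$$ where $\bigotimes_{i\ne j} K_{m_i}$ is the tensor product of the $t-1$ cliques obtained by omitting the $j$-th factor.
   Context: $K_r$ is the complete graph on $r$ vertices. The tensor product of graphs has vertex set the Cartesian product of vertex sets, with $(a_1,\dots,a_t)$ adjacent to $(b_1,\dots,b_t)$ iff $a_ib_i$ is an edge of the $i$-th factor for every $i$ (a product with a single factor is that factor). For a connected graph and an ordered set $W=\{w_1,\dots,w_k\}$ of vertices, $r(v\mid W)=(d(v,w_1),\dots,d(v,w_k))$; $W$ is resolving if distinct vertices have distinct representations; $\dim(G)$ is the minimum size of a resolving set. *)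

From HB Require Import structures.
From mathcomp Require Import all_boot.
Set Implicit Arguments. Unset Strict Implicit. Unset Printing Implicit Defensive.

(* Graph distance: the least n such that there is a walk of length exactly n
   from x to y (searched among n < #|T|; for connected graphs the distance is
   always < #|T|). *)
Definition walkb (T : finType) (e : rel T) (n : nat) (x y : T) : bool :=
  [exists p : n.-tuple T, path e x p && (last x p == y)].

Definition dist (T : finType) (e : rel T) (x y : T) : nat :=
  find (fun n => walkb e n x y) (iota 0 #|T|).

Definition connected_graph (T : finType) (e : rel T) : Prop :=
  forall x y : T, connect e x y.

Definition resolving (T : finType) (e : rel T) (W : {set T}) : bool :=
  [forall x : T, forall y : T,
     [forall w in W, dist e x w == dist e y w] ==> (x == y)].

Definition metric_dim (T : finType) (e : rel T) : nat :=
  find (fun k => [exists W : {set T}, resolving e W && (#|W| == k)])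
       (iota 0 #|T|.+1).

(* Tensor product of cliques K_{m i}, i ranging over a finite index type I:
   vertices are tuples (a_i)_i with a_i in 'I_(m i); adjacency iff a_i b_i
   is an edge of K_{m i} (i.e. a_i != b_i) for every i. *)
Definition clique_prod_vert (I : finType) (m : I -> nat) : finType :=
  {dffun forall i : I, 'I_(m i)}.

Definition clique_prod_adj (I : finType) (m : I -> nat) :
  rel (clique_prod_vert m) :=
  fun x y => [forall i : I, x i != y i].

Definition omit_factor (t : nat) (m : 'I_t -> nat) (j : 'I_t) :
  {i : 'I_t | i != j} -> nat := fun i => m (val i).

(** Distances in a product of cliques [K_m] with [m >= 3] are [0], [1] or
    [2] according as two vertices are equal, differ in every coordinate, or
    neither.  Fix a resolving set [W] of [G] and a value [c] for the [j]-th
    coordinate.  Embedding the product [G'] omitting factor [j] into [G] by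
    setting coordinate [j] to [c], the distance from an embedded vertex [x]
    to [w] is determined by [w] and the distance in [G'] from [x] to the
    projection of [w].  Hence the projection of [W] resolves [G'], and it
    has at most [#|W|] elements. *)

From mathcomp Require Import all_boot zify.
Set Implicit Arguments. Unset Strict Implicit. Unset Printing Implicit Defensive.

Lemma exists_notin (T : finType) (A : {set T}) :
  #|A| < #|T| -> exists x, x \notin A.
Proof.
move=> ltA; have /card_gt0P [x] : 0 < #|~: A| by move: ltA; rewrite -(cardsC A); lia.
by rewrite inE => ?; exists x.
Qed.

Section Distance.
Variables (T : finType) (e : rel T).

Lemma walkb0 x y : walkb e 0 x y = (x == y).
Proof.
apply/existsP/eqP => [[[[|a s] //=] _ /eqP] //|->].
by exists [tuple]; rewrite /= eqxx.
Qed.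

Lemma walkb1 x y : walkb e 1 x y = e x y.
Proof.
apply/existsP/idP => [[[[|a [|b s]] //=] _ /andP[/andP[exy _] /eqP <-]] //|exy].
by exists [tuple y]; rewrite /= exy eqxx.
Qed.

Lemma walkb2 x z y : e x z -> e z y -> walkb e 2 x y.
Proof. by move=> exz ezy; apply/existsP; exists [tuple z; y]; rewrite /= exz ezy eqxx. Qed.

Lemma dist_minimal n x y :
  n < #|T| -> walkb e n x y -> (forall k, k < n -> ~~ walkb e k x y) ->
  dist e x y = n.
Proof.
move=> ltn walk_n shorter; rewrite /dist -(subnKC (ltnW ltn)) iotaD find_cat.
have /negbTE -> : ~~ has (fun k => walkb e k x y) (iota 0 n).
  by apply/hasPn => k; rewrite mem_iota => /shorter.
by rewrite size_iota add0n -[_ - n]prednK ?subn_gt0 //= walk_n addn0.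
Qed.

Lemma dist_eq0 x y : (dist e x y == 0) = (x == y).
Proof.
rewrite /dist; have : 0 < #|T| by apply/card_gt0P; exists x.
by case: #|T| => //= n _; rewrite walkb0; case: (x == y).
Qed.

Lemma resolving_setT : resolving e setT.
Proof.
apply/forallP => x; apply/forallP => y; apply/implyP => /forallP/(_ y).
by rewrite in_setT /= => /eqP dxy; rewrite -dist_eq0 dxy dist_eq0.
Qed.

Lemma metric_dim_le_card W : resolving e W -> metric_dim e <= #|W|.
Proof.
move=> resW; rewrite /metric_dim leqNgt; apply/negP => ltW.
have := before_find 0 ltW; rewrite nth_iota ?add0n; last by rewrite ltnS max_card.
by move/negbT/negP; apply; apply/existsP; exists W; rewrite resW eqxx.
Qed.

Lemma metric_dim_attained : exists2 W : {set T}, resolving e W & #|W| = metric_dim e.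
Proof.
rewrite /metric_dim; set P := fun k => [exists W : {set T}, _].
have hasP : has P (iota 0 #|T|.+1).
  apply/hasP; exists #|T|; first by rewrite mem_iota add0n leqnn.
  by apply/existsP; exists setT; rewrite resolving_setT cardsT eqxx.
have := nth_find 0 hasP; rewrite nth_iota ?add0n; last by move: hasP; rewrite has_find size_iota.
by case/existsP => W /andP[resW /eqP cardW]; exists W.
Qed.

Lemma resolving_imset (T' : finType) (e' : rel T') (s : T' -> T) (p : T -> T')
    (F : T -> nat -> nat) (W : {set T}) :
  injective s -> (forall x w, dist e (s x) w = F w (dist e' x (p w))) ->
  resolving e W -> resolving e' (p @: W).
Proof.
move=> s_inj dist_s /forallP resW.
apply/forallP => x; apply/forallP => y; apply/implyP => /forall_inP same.
apply/eqP/s_inj; apply/eqP; have /forallP/(_ (s y))/implyP := resW (s x); apply.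
by apply/forall_inP => w Ww; rewrite !dist_s (eqP (same _ (imset_f p Ww))).
Qed.

End Distance.

Section CliqueProduct.
Variables (I : finType) (m : I -> nat).
Local Notation e := (@clique_prod_adj _ m).

Lemma clique_prod_adj_irr : I -> irreflexive e.
Proof. by move=> i0 x; apply/negbTE/forallPn; exists i0; rewrite negbK. Qed.

Hypothesis m_ge3 : forall i, 3 <= m i.

Lemma clique_prod_avoid2 x y :
  exists z : clique_prod_vert m, forall i, (z i != x i) && (z i != y i).
Proof.
have /fin_all_exists [z zP] : forall i, exists a : 'I_(m i), (a != x i) && (a != y i).
  move=> i; have [|a] := exists_notin (A := [set x i; y i]).
    by rewrite cards2 card_ord; apply: leq_trans (m_ge3 i); case: (_ != _).
  by rewrite !inE negb_or => ?; exists a.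
by exists (finfun z) => i; rewrite ffunE zP.
Qed.

Lemma dist_clique_prod x y :
  dist e x y = if x == y then 0 else if e x y then 1 else 2.
Proof.
case: eqVneq => [<-|neq_xy]; first by apply/eqP; rewrite dist_eq0.
have /existsP [i _] : [exists i, x i != y i].
  move: neq_xy; apply: contraNT => /existsPn same.
  by apply/eqP/ffunP => i; apply/eqP; rewrite -[_ == _]negbK.
have [z zP] := clique_prod_avoid2 x y.
have /andP[neq_zx neq_zy] := zP i.
case: ifP => exy; apply: dist_minimal.
- by apply/card_gt1P; exists x, y.
- by rewrite walkb1.
- by case=> // _; rewrite walkb0.
- apply/card_gt2P; exists x, z, y; split => //; split.
  + by apply: contra neq_zx => /eqP <-.
  + by apply: contra neq_zy => /eqP ->.
  + by rewrite eq_sym.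
- by apply: (@walkb2 _ _ x z); apply/forallP => k; have /andP[] := zP k; rewrite // eq_sym.
- by case=> [|[|]] // _; rewrite ?walkb0 ?walkb1 ?exy.
Qed.

End CliqueProduct.

Section OmitFactor.
Variables (t : nat) (m : 'I_t -> nat) (j : 'I_t) (c : clique_prod_vert m).
Local Notation e := (@clique_prod_adj _ m).
Local Notation e' := (@clique_prod_adj _ (@omit_factor t m j)).

Definition proj_omit (w : clique_prod_vert m) : clique_prod_vert (@omit_factor t m j) :=
  finfun (fun k => w (val k)).

Definition ext_omit (x : clique_prod_vert (@omit_factor t m j)) : clique_prod_vert m :=
  finfun (fun i : 'I_t =>
    match @idP (i != j) with
    | ReflectT ne_ij => x (exist _ i ne_ij)
    | ReflectF _ => c i
    end).

Lemma ext_omit_ne x i (ne_ij : i != j) : ext_omit x i = x (exist _ i ne_ij).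
Proof.
rewrite ffunE; destruct (@idP (i != j)) as [ne_ij'|]; last by [].
by rewrite (bool_irrelevance ne_ij' ne_ij).
Qed.

Lemma ext_omit_j x : ext_omit x j = c j.
Proof.
rewrite ffunE; destruct (@idP (j != j)) as [ne_jj|]; last by [].
by have := ne_jj; rewrite eqxx.
Qed.

Lemma ext_omitK : cancel ext_omit proj_omit.
Proof. by move=> x; apply/ffunP => -[i ne_ij]; rewrite ffunE ext_omit_ne. Qed.

Lemma ext_omit_eq x w : (ext_omit x == w) = (x == proj_omit w) && (c j == w j).
Proof.
apply/eqP/andP => [<-|[/eqP -> /eqP eq_j]]; first by rewrite ext_omitK ext_omit_j.
apply/ffunP => i; case: (eqVneq i j) => [->|ne_ij]; first by rewrite ext_omit_j.
by rewrite ext_omit_ne ffunE.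
Qed.

Lemma ext_omit_adj x w : e (ext_omit x) w = e' x (proj_omit w) && (c j != w j).
Proof.
apply/forallP/andP => [adj|[/forallP adj' ne_j] i].
  split; last by have := adj j; rewrite ext_omit_j.
  by apply/forallP => -[i ne_ij]; have := adj i; rewrite (ext_omit_ne _ ne_ij) ffunE.
case: (eqVneq i j) => [->|ne_ij]; first by rewrite ext_omit_j.
by rewrite ext_omit_ne; have := adj' (exist _ i ne_ij); rewrite ffunE.
Qed.

Definition omit_dist (w : clique_prod_vert m) (d : nat) : nat :=
  if c j == w j then (if d == 0 then 0 else 2) else (if d == 1 then 1 else 2).

(* [i0] rules out the empty product, whose single vertex is adjacent to itself. *)
Lemma dist_ext_omit (m_ge3 : forall i, 3 <= m i) (i0 : {i | i != j}) x w :
  dist e (ext_omit x) w = omit_dist w (dist e' x (proj_omit w)).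
Proof.
rewrite /omit_dist (dist_clique_prod m_ge3) (dist_clique_prod (fun i => m_ge3 (val i))).
rewrite ext_omit_eq ext_omit_adj.
case: (eqVneq x (proj_omit w)) => [->|_]; first by rewrite (clique_prod_adj_irr i0); case: ifP.
by case: (c j == w j); case: (e' _ _).
Qed.

End OmitFactor.

Theorem proposition2p4 (t : nat) (ht : 2 <= t) (m : 'I_t -> nat)
    (hm : forall i, 3 <= m i) :
  \max_(j < t) metric_dim (@clique_prod_adj _ (@omit_factor t m j))
    <= metric_dim (@clique_prod_adj _ m).
Proof.
have [W resW <-] := metric_dim_attained (@clique_prod_adj _ m).
apply/bigmax_leqP => j _.
pose c : clique_prod_vert m := finfun (fun i => Ordinal (ltn_trans (isT : 0 < 2) (hm i))).
have [i0 ne_i0j] : exists i, i \notin [set j].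
  by apply: exists_notin; rewrite cards1 card_ord.
rewrite inE in ne_i0j.
apply: leq_trans (leq_imset_card (proj_omit j) W).
apply/metric_dim_le_card/(resolving_imset _ _ resW).
- exact: can_inj (ext_omitK c).
- exact: dist_ext_omit hm (exist _ i0 ne_i0j).
Qed.
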